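(* Let $H$ be a real or complex Hilbert space of dimension $n$, let $N\ge n$, let $F=\{f_i\}_{i=1}^N$ be a Parseval frame for $H$, and let $\{q_i\}_{i=1}^N$ be a weight number sequence. The following are equivalent: (i) the canonical dual of $F$ is a 1-erasure probabilistic optimal dual of $F$; (ii) the canonical dual of $F$ is a 1-erasure probabilistic spectrally optimal dual of $F$.
   Context: Inner products are linear in the first argument. A frame $F=\{f_i\}_{i=1}^N$ is Parseval if $\sum_i|\langle f,f_i\rangle|^2=\|f\|^2$ for all $f$; its canonical dual is $\{S_F^{-1}f_i\}=\{f_i\}$, where $S_F=\Theta_F^*\Theta_F$. Analysis operator: $\Theta_Ff=(\langle f,f_i\rangle)_i$. Synthesis operator: $\Theta_G^*(c)=\sum_ic_ig_i$. A dual of $F$ is a frame $G=\{g_i\}_{i=1}^N$ with $f=\sum_i\langle f,f_i\rangle g_i=\sum_i\langle f,g_i\rangle f_i$ for all $f$. A probability sequence satisfies $0\le p_i\le1$ and $\sum p_i=1$. Weight numbers: $q_i=\frac{\sum_jp_j}{\sum_jp_j-p_i}\cdot\frac{N-1}{n}$ (assumed well defined). $\mathcal{D}_1^p$ is the set of $N\times N$ diagonal matrices with exactly one nonzero diagonal entry, equal to $q_i$ at $(i,i)$. Two quantities are used: - $d_1^p(F,G)=\max\{\|\Theta_G^*D\Theta_F\|:D\in\mathcal{D}_1^p\}$ (operator norm); - $\mathcal{R}_1^p(F,G)=\max\{\rho(\Theta_G^*D\Theta_F):D\in\mathcal{D}_1^p\}$ ($\rho$ the spectral radius). $G$ is a 1-erasure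 probabilistic optimal dual of $F$ if $d_1^p(F,G)=\inf\{d_1^p(F,G'):G'\text{ a dual of }F\}$. $G$ is a 1-erasure probabilistic spectrally optimal dual of $F$ if $\mathcal{R}_1^p(F,G)=\inf\{\mathcal{R}_1^p(F,G'):G'\text{ a dual of }F\}$. *)

From HB Require Import structures.
From mathcomp Require Import all_boot all_order all_algebra.
From mathcomp Require Import complex.
From mathcomp Require Import boolp classical_sets reals.
Set Implicit Arguments. Unset Strict Implicit. Unset Printing Implicit Defensive.
Import Order.TTheory GRing.Theory Num.Theory.
Local Open Scope ring_scope.
Local Open Scope classical_set_scope.

(* Setting: H = K^n with K = R (when real = true) or K = C = R[i]
   (real = false).  Both are modelled inside C^n: when real = true, H is the
   set of vectors with real entries.  Inner product linear in the first
   argument: <u,v> = sum_k u_k conj(v_k). *)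

Section Frames.
Variable R : realType.
Local Notation C := R[i].

Definition cabs (z : C) : R := complex.Re `|z|.

Variable n : nat.

Definition ip (u v : 'cV[C]_n) : C := \sum_k u k 0 * (v k 0)^*.
Definition vnorm (v : 'cV[C]_n) : R := Num.sqrt (\sum_k cabs (v k 0) ^+ 2).

Definition inH (real : bool) (v : 'cV[C]_n) : Prop :=
  real -> forall k, v k 0 \is Num.real.

Variable N : nat.
Implicit Types f g : 'I_N -> 'cV[C]_n.

Definition familyH real f : Prop := forall i, inH real (f i).

(* analysis operator Theta_F f = (<f, f_i>)_i, as an N x n matrix *)
Definition anal f : 'M[C]_(N, n) := \matrix_(i, k) (f i k 0)^*.
(* synthesis operator Theta_G^* c = sum_i c_i g_i, as an n x N matrix *)
Definition synth g : 'M[C]_(n, N) := \matrix_(k, i) g i k 0.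
Definition frame_op f : 'M[C]_n := synth f *m anal f.
Definition cdual f : 'I_N -> 'cV[C]_n := fun i => invmx (frame_op f) *m f i.

Definition is_frame real f : Prop :=
  familyH real f /\
  exists A B : R, 0 < A /\ 0 < B /\
    forall v, inH real v ->
      A * vnorm v ^+ 2 <= \sum_i cabs (ip v (f i)) ^+ 2 <= B * vnorm v ^+ 2.

Definition parseval real f : Prop :=
  familyH real f /\
  forall v, inH real v -> \sum_i cabs (ip v (f i)) ^+ 2 = vnorm v ^+ 2.

Definition is_dual real f g : Prop :=
  is_frame real g /\
  forall v, inH real v ->
    v = \sum_i ip v (f i) *: g i /\ v = \sum_i ip v (g i) *: f i.

Definition prob_seq (p : 'I_N -> R) : Prop :=
  (forall i, 0 <= p i <= 1) /\ \sum_i p i = 1.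

Definition weights (p : 'I_N -> R) (i : 'I_N) : R :=
  (\sum_j p j) / (\sum_j p j - p i) * ((N - 1)%:R / n%:R).

Definition Dmat (q : 'I_N -> R) (i : 'I_N) : 'M[C]_N :=
  \matrix_(j, k) (if (j == i) && (k == i) then ((q i)%:C)%C else 0).

Definition opnorm real (T : 'M[C]_n) : R :=
  sup [set vnorm (T *m v) | v in [set v | inH real v /\ vnorm v = 1]].

Definition specrad (T : 'M[C]_n) : R :=
  sup [set cabs l | l in [set l | eigenvalue T l]].

Definition d1p real q f g : R :=
  \big[Num.max/0]_(i < N) opnorm real (synth g *m Dmat q i *m anal f).

Definition R1p q f g : R :=
  \big[Num.max/0]_(i < N) specrad (synth g *m Dmat q i *m anal f).

Definition prob_opt_dual real q f g : Prop :=
  is_dual real f g /\ forall g', is_dual real f g' -> d1p real q f g <= d1p real q f g'.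

Definition prob_spec_opt_dual real q f g : Prop :=
  is_dual real f g /\ forall g', is_dual real f g' -> R1p q f g <= R1p q f g'.

End Frames.

From HB Require Import structures.
From mathcomp Require Import all_boot all_order all_algebra.
From mathcomp Require Import complex.
From mathcomp Require Import boolp classical_sets reals.
From mathcomp Require Import ring lra.
Set Implicit Arguments. Unset Strict Implicit. Unset Printing Implicit Defensive.
Import Order.TTheory GRing.Theory Num.Theory.
Local Open Scope ring_scope.

(* Polarizing the Parseval identity shows that the frame operator of F is the
   identity, so the canonical dual of F is F itself.  Every operator
   Θ_G^* D Θ_F with D in D_1^p is the rank-one map q_i g_i f_i^*: its norm is
   q_i ‖f_i‖ ‖g_i‖ and its only possible nonzero eigenvalue is q_i ⟨g_i, f_i⟩.
   Hence R_1^p(F, G) <= d_1^p(F, G) by Cauchy-Schwarz, with equality at G = F,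
   which gives (ii) => (i).  Conversely, if F is optimal for d_1^p but some dual
   G has D := R_1^p(F, G) < M := R_1^p(F, F) = d_1^p(F, F), then the duals
   F + t (G - F) satisfy, because Re ⟨g_i, f_i⟩ <= |⟨g_i, f_i⟩|,
     (q_i ‖f_i‖ ‖f_i + t (g_i - f_i)‖)^2 <= M^2 - 2 t M (M - D) + O(t^2),
   so d_1^p(F, F + t (G - F)) < M for small t > 0, a contradiction. *)

Section ComplexModulus.
Variable R : realType.
Local Notation C := R[i].
Implicit Types z w : C.

Lemma cabsE z : ((cabs z)%:C)%C = `|z|.
Proof. by rewrite /cabs normc_def /=. Qed.

Lemma cabs_ge0 z : 0 <= cabs z.
Proof. by rewrite /cabs normc_def /= sqrtr_ge0. Qed.

Lemma cabsM z w : cabs (z * w) = cabs z * cabs w.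
Proof. by apply: complexI; rewrite rmorphM /= !cabsE normrM. Qed.

Lemma cabs_real (x : R) : cabs (x%:C)%C = `|x|.
Proof. by apply: complexI; rewrite cabsE normc_def /= expr0n addr0 sqrtr_sqr. Qed.

Lemma cabs0 : cabs (0 : C) = 0.
Proof. by rewrite -[0 : C]/((0 : R)%:C)%C cabs_real normr0. Qed.

Lemma cabs_sqr z : ((cabs z ^+ 2)%:C)%C = z * z^*.
Proof. by rewrite rmorphXn /= cabsE normCK. Qed.

Lemma Re_le_cabs z : complex.Re z <= cabs z.
Proof.
case: z => a b; rewrite /cabs normc_def /=.
by rewrite (le_trans (ler_norm a)) // -sqrtr_sqr ler_wsqrtr // lerDl sqr_ge0.
Qed.

Lemma conj_real (x : R) : ((x%:C)%C)^* = (x%:C)%C :> C.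
Proof. exact: conjc_real. Qed.

Lemma real_complex_real (x : R) : (x%:C)%C \is @Num.real C.
Proof. by rewrite complex_real. Qed.

End ComplexModulus.

Section InnerProduct.
Variables (R : realType) (n : nat).
Local Notation C := R[i].
Implicit Types u v w : 'cV[C]_n.

Lemma ipDl u w v : ip (u + w) v = ip u v + ip w v.
Proof. by rewrite /ip -big_split; apply: eq_bigr => k _; rewrite mxE mulrDl. Qed.

Lemma ipZl a u v : ip (a *: u) v = a * ip u v.
Proof. by rewrite /ip mulr_sumr; apply: eq_bigr => k _; rewrite mxE mulrA. Qed.

Lemma ipBl u w v : ip (u - w) v = ip u v - ip w v.
Proof. by rewrite ipDl -scaleN1r ipZl mulN1r. Qed.

Lemma ip_suml (I : finType) (c : I -> C) (w : I -> 'cV[C]_n) v :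
  ip (\sum_i c i *: w i) v = \sum_i c i * ip (w i) v.
Proof.
rewrite /ip; under eq_bigr do rewrite summxE mulr_suml.
rewrite exchange_big; apply: eq_bigr => i _; rewrite mulr_sumr.
by apply: eq_bigr => k _; rewrite mxE mulrA.
Qed.

Lemma ipC u v : ip v u = (ip u v)^*.
Proof.
rewrite /ip rmorph_sum; apply: eq_bigr => k _.
by rewrite rmorphM /= conjCK mulrC.
Qed.

Lemma ipDr u v w : ip u (v + w) = ip u v + ip u w.
Proof. by rewrite ipC ipDl rmorphD /= -!ipC. Qed.

Lemma ipZr a u v : ip u (a *: v) = a^* * ip u v.
Proof. by rewrite ipC ipZl rmorphM /= -ipC. Qed.

Lemma ipBr u v w : ip u (v - w) = ip u v - ip u w.
Proof. by rewrite ipDr -scaleN1r ipZr rmorphN1 mulN1r. Qed.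

Lemma ip_sumr (I : finType) (c : I -> C) (w : I -> 'cV[C]_n) v :
  ip v (\sum_i c i *: w i) = \sum_i (c i)^* * ip v (w i).
Proof.
rewrite ipC ip_suml rmorph_sum; apply: eq_bigr => i _.
by rewrite rmorphM /= -ipC.
Qed.

Lemma ip0r u : ip u 0 = 0.
Proof. by rewrite -(scale0r 0) ipZr rmorph0 mul0r. Qed.

Lemma ip_dotmx u v : ip u v = dotmx u^T v^T.
Proof. by rewrite dotmxE mxE; apply: eq_bigr => k _; rewrite !mxE. Qed.

Lemma vnorm_ge0 v : 0 <= vnorm v.
Proof. exact: sqrtr_ge0. Qed.

Lemma ip_self v : ip v v = ((vnorm v ^+ 2)%:C)%C.
Proof.
rewrite sqr_sqrtr ?sumr_ge0 // => [|k _]; last exact: sqr_ge0.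
by rewrite /ip rmorph_sum; apply: eq_bigr => k _; apply/esym/cabs_sqr.
Qed.

Lemma vnorm_eq0 v : (vnorm v == 0) = (v == 0).
Proof.
rewrite -sqrf_eq0 -(inj_eq (@complexI _)) -ip_self.
by rewrite ip_dotmx dnorm_eq0 trmx_eq0.
Qed.

Lemma vnormZ a v : vnorm (a *: v) = cabs a * vnorm v.
Proof.
apply/eqP; rewrite -(eqrXn2 (ltn0Sn 1)) ?mulr_ge0 ?vnorm_ge0 ?cabs_ge0 //.
apply/eqP/complexI; rewrite -ip_self ipZl ipZr mulrA -cabs_sqr ip_self exprMn.
by rewrite -rmorphM.
Qed.

Lemma ip_le_vnorm u v : cabs (ip u v) <= vnorm u * vnorm v.
Proof.
rewrite -(ler_pXn2r (ltn0Sn 1)) ?nnegrE ?mulr_ge0 ?vnorm_ge0 ?cabs_ge0 //.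
have [CS _] : `|ip u v| ^+ 2 <= ip u u * ip v v ?= iff ~~ free [:: u^T; v^T].
  by rewrite !ip_dotmx; apply: CauchySchwarz.
by rewrite !ip_self -cabsE -rmorphXn -rmorphM lecR -exprMn in CS.
Qed.

Lemma vnorm_sqrD u w (t : R) :
  vnorm (u + (t%:C)%C *: w) ^+ 2 =
  vnorm u ^+ 2 + 2 * t * complex.Re (ip w u) + t ^+ 2 * vnorm w ^+ 2.
Proof.
apply: complexI; rewrite -ip_self ipDl !ipDr !ipZl !ipZr [ip u w]ipC !ip_self.
have := ReJ_add (ip w u); rewrite conj_real !rmorphD !rmorphM /= => ->.
by rewrite rmorph_nat; field.
Qed.

Lemma Re_ipBl u w v :
  complex.Re (ip (u - w) v) = complex.Re (ip u v) - complex.Re (ip w v).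
Proof. by rewrite ipBl; case: (ip u v) (ip w v) => [a b] [c d]. Qed.

Lemma exists_unit_vector (real : bool) :
  (0 < n)%N -> exists2 x : 'cV[C]_n, inH real x & vnorm x = 1.
Proof.
move=> n_gt0; pose k := Ordinal n_gt0; exists (delta_mx k 0).
  by move=> _ j; rewrite mxE; case: (_ && _); rewrite ?real1 ?real0.
rewrite /vnorm (bigD1 k) //= big1 => [|j /negbTE jk]; last first.
  by rewrite mxE jk cabs0 expr0n.
by rewrite mxE !eqxx -[1 : C]/((1 : R)%:C)%C cabs_real normr1 expr1n addr0 sqrtr1.
Qed.

End InnerProduct.

Lemma sup_mem_ubound (R : realType) (E : set R) x :
  E x -> ubound E x -> sup E = x.
Proof.
move=> Ex ubx; have supE : has_sup E by split; exists x.
by apply/le_anti; rewrite ge_sup ?sup_upper_bound //; exists x.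
Qed.

Section RankOne.
Variables (R : realType) (n : nat).
Local Notation C := R[i].
Implicit Types u v x : 'cV[C]_n.

Lemma adj_mul v x : (v ^t*)%sesqui *m x = (ip x v)%:M.
Proof.
apply/matrixP=> i j; rewrite !ord1 !mxE eqxx mulr1n /ip.
by apply: eq_bigr => k _; rewrite !mxE mulrC; reflexivity.
Qed.

Lemma rank1_mul u v x : u *m (v ^t*)%sesqui *m x = ip x v *: u.
Proof. by rewrite -mulmxA adj_mul mul_mx_scalar. Qed.

Lemma rank1_sqr u v :
  u *m (v ^t*)%sesqui *m (u *m (v ^t*)%sesqui) = ip u v *: (u *m (v ^t*)%sesqui).
Proof. by rewrite mulmxA rank1_mul scalemxAl. Qed.

Hypothesis n_gt0 : (0 < n)%N.

Lemma opnorm_rank1 (real : bool) u v :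
  inH real v -> opnorm real (u *m (v ^t*)%sesqui) = vnorm u * vnorm v.
Proof.
move=> vH; apply: sup_mem_ubound => [|_ [x [_ x1] <-]]; last first.
  rewrite rank1_mul vnormZ mulrC ler_wpM2l ?vnorm_ge0 //.
  by rewrite (le_trans (ip_le_vnorm x v)) // x1 mul1r.
have [->|v_neq0] := eqVneq v 0.
  have [x xH x1] := exists_unit_vector R real n_gt0.
  exists x => //; rewrite rank1_mul ip0r scale0r.
  by rewrite -(scale0r (0 : 'cV[C]_n)) !vnormZ cabs0 !mul0r mulr0.
have vn_gt0 : 0 < vnorm v by rewrite lt_def vnorm_eq0 v_neq0 vnorm_ge0.
pose c : R := (vnorm v)^-1.
have c_ge0 : 0 <= c by rewrite invr_ge0 ltW.
exists ((c%:C)%C *: v).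
  split; last by rewrite vnormZ cabs_real ger0_norm // mulVf ?gt_eqF.
  by move=> /vH vR k; rewrite mxE rpredM ?real_complex_real.
rewrite rank1_mul vnormZ ipZl ip_self cabsM cabs_real ger0_norm //.
rewrite cabs_real ger0_norm ?exprn_ge0 ?vnorm_ge0 // mulrC /c.
by rewrite expr2 mulrA mulVf ?gt_eqF // mul1r.
Qed.

Lemma eigenvalue_rank1 u v l :
  eigenvalue (u *m (v ^t*)%sesqui) l -> l = 0 \/ l = ip u v.
Proof.
move=> /eigenvalueP[w wT w_neq0].
have : (l ^+ 2 - ip u v * l) *: w = 0.
  rewrite scalerBl expr2 -!scalerA -wT [X in X - _]scalemxAl -wT -mulmxA.
  by rewrite rank1_sqr -scalemxAr subrr.
move/eqP; rewrite scaler_eq0 (negbTE w_neq0) orbF expr2 -mulrBl mulf_eq0 subr_eq0.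
by case/orP=> /eqP; [right | left].
Qed.

Lemma specrad_rank1 u v : specrad (u *m (v ^t*)%sesqui) = cabs (ip u v).
Proof.
apply: sup_mem_ubound => [|_ [l /eigenvalue_rank1[] -> <-] //]; last first.
  by rewrite cabs0 cabs_ge0.
have [v0|v_neq0] := eqVneq v 0.
  have [l Tl] := eigenvalue_closed (u *m (v ^t*)%sesqui) n_gt0.
  exists l => //; rewrite v0 ip0r.
  by case: (eigenvalue_rank1 Tl) => ->; rewrite ?v0 ?ip0r.
exists (ip u v) => //; apply/eigenvalueP; exists (v ^t*)%sesqui.
  by rewrite mulmxA adj_mul mul_scalar_mx.
by rewrite map_mx_eq0 trmx_eq0.
Qed.

End RankOne.

Section FrameOperator.
Variables (R : realType) (n N : nat).
Local Notation C := R[i].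
Implicit Types (f g : 'I_N -> 'cV[C]_n) (v : 'cV[C]_n).

Lemma anal_mulE g v i : (anal g *m v) i 0 = ip v (g i).
Proof. by rewrite mxE; apply: eq_bigr => k _; rewrite mxE mulrC. Qed.

Lemma vnorm_anal g v : vnorm (anal g *m v) ^+ 2 = \sum_i cabs (ip v (g i)) ^+ 2.
Proof.
rewrite sqr_sqrtr; last by apply: sumr_ge0 => i _; exact: sqr_ge0.
by apply: eq_bigr => i _; rewrite anal_mulE.
Qed.

Lemma frame_op_mul f v : frame_op f *m v = \sum_i ip v (f i) *: f i.
Proof.
apply/matrixP => k j; rewrite !ord1 -mulmxA mxE summxE.
by apply: eq_bigr => i _; rewrite anal_mulE !mxE mulrC.
Qed.

Lemma ip_frame_op f v :
  ip (frame_op f *m v) v = ((\sum_i cabs (ip v (f i)) ^+ 2)%:C)%C.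
Proof.
rewrite frame_op_mul ip_suml rmorph_sum; apply: eq_bigr => i _.
by rewrite [ip (f i) v]ipC; apply/esym/cabs_sqr.
Qed.

End FrameOperator.

Section QuadraticForm.
Variables (R : realType) (n : nat).
Local Notation C := R[i].

Lemma ip_mul_delta (A : 'M[C]_n) k l :
  ip (A *m delta_mx l 0) (delta_mx k 0) = A k l.
Proof.
rewrite -colE /ip (bigD1 k) //= big1 => [|j /negbTE jk]; last first.
  by rewrite !mxE jk conjC0 mulr0.
by rewrite !mxE !eqxx conjC1 mulr1 addr0.
Qed.

Lemma quadratic_form_eq0 (real : bool) (A : 'M[C]_n) :
  (real -> A^T = A) -> (forall v, inH real v -> ip (A *m v) v = 0) -> A = 0.
Proof.
move=> Asym A0; pose e k : 'cV[C]_n := delta_mx k 0.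
have eH k l (c : C) : c \is Num.real \/ ~~ real -> inH real (e k + c *: e l).
  move=> [cR|/negP nR /nR //] _ j; rewrite !mxE.
  by rewrite rpredD ?rpredM //; case: (_ && _); rewrite ?real1 ?real0.
have Aee k : A k k = 0.
  have := A0 _ (eH k k 0 (or_introl (real0 _))).
  by rewrite scale0r /= addr0 ip_mul_delta.
have polar k l (c : C) : c \is Num.real \/ ~~ real -> c^* * A l k + c * A k l = 0.
  move=> /(eH k l) /A0; rewrite mulmxDr -scalemxAr !ipDl !ipDr !ipZl !ipZr.
  by rewrite !ip_mul_delta !Aee !mulr0 add0r addr0.
have Asym' k l : A l k = A k l.
  case: real Asym eH A0 polar => [/(_ isT) At _ _ _ | _ _ _ polar].
    by rewrite -{1}At mxE.
  have /eqP := polar k l 'i (or_intror isT); rewrite conjCi mulNr addrC subr_eq0.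
  by move=> /eqP/(mulfI (neq0Ci _)).
apply/matrixP => k l; have /eqP := polar k l 1 (or_introl (real1 _)).
by rewrite conjC1 !mul1r Asym' -mulr2n mulrn_eq0 /= mxE => /eqP.
Qed.

End QuadraticForm.

Section Parseval.
Variables (R : realType) (n N : nat) (real : bool) (f : 'I_N -> 'cV[R[i]]_n).
Hypothesis fP : parseval real f.

Lemma vnorm_anal_parseval v : inH real v -> vnorm (anal f *m v) = vnorm v.
Proof.
move=> vH; apply/eqP; rewrite -(eqrXn2 (ltn0Sn 1)) ?vnorm_ge0 //.
by rewrite vnorm_anal fP.2.
Qed.

Lemma parseval_frame_op : frame_op f = 1%:M.
Proof.
apply/eqP; rewrite -subr_eq0; apply/eqP/(quadratic_form_eq0 (real := real)).
  move=> rl; rewrite linearB /= trmx1; congr (_ - _); apply/matrixP => k l.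
  rewrite !mxE; apply: eq_bigr => i _; rewrite !mxE mulrC.
  by rewrite !(CrealP (fP.1 i rl _)).
move=> v vH; rewrite mulmxBl mul1mx ipBl ip_frame_op ip_self.
by rewrite -vnorm_anal vnorm_anal_parseval // subrr.
Qed.

Lemma cdual_parseval : cdual f = f.
Proof. by apply: funext => i; rewrite /cdual parseval_frame_op invmx1 mul1mx. Qed.

Lemma frame_of_reconstruction g : familyH real g ->
  (forall v, inH real v -> v = \sum_i ip v (g i) *: f i) -> is_frame real g.
Proof.
move=> gH rec; split => //; exists 1, (1 + \sum_i vnorm (g i) ^+ 2).
have G0 : 0 <= \sum_i vnorm (g i) ^+ 2 by apply: sumr_ge0 => i _; exact: sqr_ge0.
split; first exact: ltr01.
split; first by rewrite ltr_wpDr ?ltr01.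
move=> v vH; rewrite -vnorm_anal mul1r; apply/andP; split.
  have vv : ip v v = ip (anal f *m v) (anal g *m v).
    rewrite {2}(rec v vH) ip_sumr /ip; apply: eq_bigr => i _.
    by rewrite !anal_mulE mulrC.
  have : vnorm v ^+ 2 <= vnorm v * vnorm (anal g *m v).
    rewrite -[X in X <= _]ger0_norm ?exprn_ge0 ?vnorm_ge0 //.
    rewrite -cabs_real -ip_self vv.
    by rewrite -(vnorm_anal_parseval vH) ip_le_vnorm.
  have := vnorm_ge0 v; have := vnorm_ge0 (anal g *m v); nra.
rewrite vnorm_anal mulrDl mul1r ler_wpDl ?exprn_ge0 ?vnorm_ge0 // mulr_suml.
apply: ler_sum => i _; rewrite -exprMn mulrC.
by rewrite ler_pXn2r ?nnegrE ?cabs_ge0 ?mulr_ge0 ?vnorm_ge0 // ip_le_vnorm.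
Qed.

Lemma is_dual_affine g h (t : R) : is_dual real f g -> is_dual real f h ->
  is_dual real f (fun i => g i + (t%:C)%C *: (h i - g i)).
Proof.
move=> [[gH _] gd] [[hH _] hd].
have rec v : inH real v -> v = \sum_i ip v (g i + (t%:C)%C *: (h i - g i)) *: f i.
  move=> vH; rewrite (eq_bigr (fun i => ip v (g i) *: f i +
    (t%:C)%C *: (ip v (h i) *: f i - ip v (g i) *: f i))) => [|i _]; last first.
    by rewrite ipDr ipZr conj_real ipBr scalerDl -scalerA scalerBl.
  rewrite big_split -scaler_sumr sumrB /= -(gd v vH).2 -(hd v vH).2.
  by rewrite subrr scaler0 addr0.
split.
  apply: frame_of_reconstruction rec => i /[dup] /gH gR /hH hR k.
  by rewrite !mxE rpredD ?rpredM ?rpredB ?real_complex_real ?gR ?hR.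
move=> v vH; split; last exact: rec.
rewrite (eq_bigr (fun i => ip v (f i) *: g i +
  (t%:C)%C *: (ip v (f i) *: h i - ip v (f i) *: g i))) => [|i _]; last first.
  by rewrite scalerDr scalerA mulrC -scalerA scalerBr.
rewrite big_split -scaler_sumr sumrB /= -(gd v vH).1 -(hd v vH).1.
by rewrite subrr scaler0 addr0.
Qed.

End Parseval.

Lemma exists_small_step (R : realFieldType) (E L : R) : 0 < E -> 0 <= L ->
  exists t, [/\ 0 < t, 2 * t <= 1 & t ^+ 2 * L < 2 * t * E].
Proof.
move=> E0 L0; have LE0 : 0 < L + 2 * E by rewrite ltr_wpDl // mulr_gt0.
have t0 : 0 < E / (L + 2 * E) by rewrite divr_gt0.
have tLE : E / (L + 2 * E) * (L + 2 * E) = E by rewrite divfK ?gt_eqF.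
move: (E / _) t0 tLE => t t0 tLE; exists t; split=> //.
  by rewrite -(ler_pM2r LE0) mul1r -mulrA tLE lerDr.
have : t * L < 2 * E by have := mulr_gt0 t0 E0; lra.
by rewrite expr2 -mulrA [2 * t]mulrC -mulrA ltr_pM2l.
Qed.

Lemma sqr_step_bound (R : realType) (n : nat) (q M D t : R) (u w : 'cV[R[i]]_n) :
  0 <= q -> q * vnorm u ^+ 2 <= M -> q * cabs (ip w u) <= D -> 0 <= D ->
  0 <= t -> 2 * t <= 1 ->
  (q * vnorm u * vnorm (u + (t%:C)%C *: (w - u))) ^+ 2 <=
  M ^+ 2 - 2 * t * (M * (M - D)) + t ^+ 2 * (q * vnorm u * vnorm (w - u)) ^+ 2.
Proof.
move=> q0 XM YD D0 t0 t1.
rewrite [in X in X <= _]exprMn vnorm_sqrD Re_ipBl ip_self /=.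
set a := vnorm u; set r := complex.Re (ip w u); set K := vnorm (w - u).
have X0 : 0 <= q * a ^+ 2 by rewrite mulr_ge0 ?sqr_ge0.
have XM2 : (q * a ^+ 2) ^+ 2 <= M ^+ 2.
  by rewrite ler_pXn2r ?nnegrE // (le_trans X0).
have XY : (q * a ^+ 2) * (q * r) <= M * D.
  rewrite (@le_trans _ _ ((q * a ^+ 2) * D)) ?ler_wpM2l ?ler_wpM2r //.
  by rewrite (le_trans _ YD) // ler_wpM2l // Re_le_cabs.
have -> : (q * a) ^+ 2 * (a ^+ 2 + 2 * t * (r - a ^+ 2) + t ^+ 2 * K ^+ 2) =
  (1 - 2 * t) * (q * a ^+ 2) ^+ 2 + 2 * t * ((q * a ^+ 2) * (q * r)) +
  t ^+ 2 * (q * a * K) ^+ 2 by ring.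
nra.
Qed.

Section Optimality.
Variables (R : realType) (n N : nat) (real : bool).
Variables (q : 'I_N -> R) (f : 'I_N -> 'cV[R[i]]_n).
Implicit Types g : 'I_N -> 'cV[R[i]]_n.

Lemma synth_Dmat_anal g i :
  synth g *m Dmat q i *m anal f = ((q i)%:C%C *: g i) *m (f i ^t*)%sesqui.
Proof.
have -> : Dmat q i = (q i)%:C%C *: (delta_mx i (0 : 'I_1) *m delta_mx 0 i : 'M_N).
  apply/matrixP => j k; rewrite mul_delta_mx !mxE.
  by case: (_ && _); rewrite ?mulr1 ?mulr0.
have colg : synth g *m delta_mx i (0 : 'I_1) = g i.
  by rewrite -colE; apply/matrixP => k j; rewrite !mxE ord1.
have rowf : delta_mx (0 : 'I_1) i *m anal f = (f i ^t*)%sesqui.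
  by rewrite -rowE; apply/matrixP => j k; rewrite !mxE ord1.
by rewrite -scalemxAr -!scalemxAl !mulmxA colg -mulmxA rowf.
Qed.

Hypotheses (n_gt0 : (0 < n)%N) (q_ge0 : forall i, 0 <= q i) (fH : familyH real f).

Lemma R1pE g : R1p q f g = \big[Num.max/0]_i (q i * cabs (ip (g i) (f i))).
Proof.
apply: eq_bigr => i _.
by rewrite synth_Dmat_anal specrad_rank1 // ipZl cabsM cabs_real ger0_norm.
Qed.

Lemma d1pE g :
  d1p real q f g = \big[Num.max/0]_i (q i * vnorm (f i) * vnorm (g i)).
Proof.
apply: eq_bigr => i _.
by rewrite synth_Dmat_anal opnorm_rank1 // vnormZ cabs_real ger0_norm // mulrAC.
Qed.

Lemma d1p_self : d1p real q f f = R1p q f f.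
Proof.
rewrite d1pE R1pE; apply: eq_bigr => i _.
by rewrite ip_self cabs_real ger0_norm ?sqr_ge0 // expr2 mulrA.
Qed.

Lemma R1p_le_d1p g : R1p q f g <= d1p real q f g.
Proof.
rewrite R1pE d1pE; apply: le_bigmax2 => i _.
by rewrite -mulrA ler_wpM2l // mulrC ip_le_vnorm.
Qed.

Lemma d1p_step_lt g : R1p q f g < R1p q f f -> exists t : R,
  d1p real q f (fun i => f i + (t%:C)%C *: (g i - f i)) < d1p real q f f.
Proof.
rewrite d1p_self; set M := R1p q f f; set D := R1p q f g => DM.
have D0 : 0 <= D by rewrite /D R1pE bigmax_ge_id.
have M0 : 0 < M := le_lt_trans D0 DM.
have fM i : q i * vnorm (f i) ^+ 2 <= M.
  have := le_bigmax 0 (fun i => q i * cabs (ip (f i) (f i))) i.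
  by rewrite -R1pE ip_self cabs_real ger0_norm ?sqr_ge0.
have gD i : q i * cabs (ip (g i) (f i)) <= D.
  by have := le_bigmax 0 (fun i => q i * cabs (ip (g i) (f i))) i; rewrite -R1pE.
clearbody M D.
pose L := \sum_i (q i * vnorm (f i) * vnorm (g i - f i)) ^+ 2.
have L0 : 0 <= L by apply: sumr_ge0 => i _; exact: sqr_ge0.
have Li i : (q i * vnorm (f i) * vnorm (g i - f i)) ^+ 2 <= L.
  by rewrite /L (bigD1 i) //= lerDl sumr_ge0 // => j _; exact: sqr_ge0.
have E0 : 0 < M * (M - D) by apply: mulr_gt0; rewrite ?subr_gt0.
have [t [t0 t1 tL]] := exists_small_step E0 L0.
exists t; rewrite d1pE; apply: bigmax_lt => // i _.
rewrite -(ltr_pXn2r (ltn0Sn 1)) ?nnegrE ?(ltW M0) ?mulr_ge0 ?vnorm_ge0 //.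
apply: le_lt_trans (sqr_step_bound (q_ge0 i) (fM i) (gD i) D0 (ltW t0) t1) _.
have := ler_wpM2l (sqr_ge0 t) (Li i); lra.
Qed.

End Optimality.

Lemma weights_ge0 (R : realType) (n N : nat) (p : 'I_N -> R) i :
  prob_seq p -> 0 <= weights n p i.
Proof.
move=> [p01 p1]; rewrite /weights p1 mulr_ge0 ?divr_ge0 ?ler01 ?subr_ge0 //.
by case/andP: (p01 i).
Qed.

Theorem theorem4p2 (R : realType) (real : bool) (n N : nat)
    (f : 'I_N -> 'cV[R[i]]_n) (p : 'I_N -> R) :
  (0 < n)%N -> (n <= N)%N ->
  parseval real f ->
  prob_seq p ->
  (forall i, \sum_j p j - p i != 0) ->
  (prob_opt_dual real (weights n p) f (cdual f) <->
   prob_spec_opt_dual real (weights n p) f (cdual f)).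
Proof.
move=> n_gt0 _ fP pP _.
have q_ge0 i := weights_ge0 n i pP.
rewrite (cdual_parseval fP).
split=> -[f_dual f_opt]; split=> [|g g_dual]; try exact: f_dual.
  rewrite leNgt; apply/negP => /(d1p_step_lt n_gt0 q_ge0 fP.1)[t].
  by rewrite ltNge (f_opt _ (is_dual_affine fP t f_dual g_dual)).
rewrite (d1p_self n_gt0 q_ge0 fP.1).
exact: le_trans (f_opt g g_dual) (R1p_le_d1p n_gt0 q_ge0 fP.1 g).
Qed.
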